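(* For any permutation $\pi$ of $D$, the function $f:D'^2\to\mathbb{R}$ given by $f(x,y)=0$ if $x=y=0$ or if $x,y\in D$ with $x=\pi(y)$; $f(x,y)=1$ if $x,y\in D$ with $x\ne\pi(y)$; and $f(x,y)=\tfrac12$ if exactly one of $x,y$ equals $0$ (the basic $k$-submodular relaxation of the soft version of the constraint $(x=\pi(y))$) is $k$-submodular representable.
   Context: $D=\{1,\dots,k\}$, $D'=\{0\}\cup D$. For a variable set $X$ and $v\in X$ let $X_v=\{v_i:i\in D\}$. An $(X,k)$-network is a directed network with nonnegative capacities $c$ on vertex set $\bigcup_{v\in X}X_v\cup\{s,t\}$; an $s$-$t$ cut $S$ has capacity the total capacity of edges leaving $S$. For $\phi:X\to D'$, $S_\phi=\{s\}\cup\{v_{\phi(v)}:\phi(v)\ne0\}$; the network represents $g$ if $c(S_\phi)=g(\phi)$ for all $\phi$. For an $s$-$t$ cut $S$, $\nu(S)=\{s\}\cup\{v_i:S\cap X_v=\{v_i\}\}$; the network is $k$-submodular if $c(S)\ge c(\nu(S))$ for every $s$-$t$ cut. A function of variables $X$ is $k$-submodular representable if some $k$-submodular $(X,k)$-network represents it. *)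

From HB Require Import structures.
From mathcomp Require Import all_boot all_order all_algebra all_fingroup.
From mathcomp Require Import reals.
Set Implicit Arguments. Unset Strict Implicit. Unset Printing Implicit Defensive.
Import Order.TTheory GRing.Theory Num.Theory.
Local Open Scope ring_scope.

(* Conventions:
   - D = {1,...,k} is represented by 'I_k (i : 'I_k stands for i+1).
   - D' = {0} ∪ D is represented by option 'I_k (None stands for 0,
     Some i stands for i+1).
   - The vertex set ⋃_v X_v ∪ {s,t} of an (X,k)-network is
     node X k := option (option (X * 'I_k)) with
       None = s, Some None = t, Some (Some (v,i)) = v_{i+1}. *)

Definition node (X : finType) (k : nat) : finType := option (option (X * 'I_k)).
Definition src {X : finType} {k : nat} : node X k := None.
Definition snk {X : finType} {k : nat} : node X k := Some None.
Definition vx {X : finType} {k : nat} (v : X) (i : 'I_k) : node X k := Some (Some (v, i)).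

Definition network (R : realType) (X : finType) (k : nat) := node X k -> node X k -> R.

Definition nonneg_network (R : realType) (X : finType) (k : nat) (c : network R X k) :=
  forall u w, 0 <= c u w.

Definition is_st_cut (X : finType) (k : nat) (S : {set node X k}) :=
  (src \in S) && (snk \notin S).

Definition cut_cap (R : realType) (X : finType) (k : nat) (c : network R X k)
  (S : {set node X k}) : R :=
  \sum_(u in S) \sum_(w in ~: S) c u w.

Definition S_of (X : finType) (k : nat) (phi : X -> option 'I_k) : {set node X k} :=
  src |: [set w : node X k | [exists v : X, exists i : 'I_k, (w == vx v i) && (phi v == Some i)]].

Definition nu (X : finType) (k : nat) (S : {set node X k}) : {set node X k} :=
  src |: [set w : node X k | [exists v : X, exists i : 'I_k,
     [&& w == vx v i, vx v i \in S & [forall j : 'I_k, (vx v j \in S) ==> (j == i)]]]].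

Definition represents (R : realType) (X : finType) (k : nat) (c : network R X k)
  (g : (X -> option 'I_k) -> R) :=
  forall phi : X -> option 'I_k, cut_cap c (S_of phi) = g phi.

Definition ksubmodular_network (R : realType) (X : finType) (k : nat) (c : network R X k) :=
  forall S : {set node X k}, is_st_cut S -> cut_cap c (nu S) <= cut_cap c S.

Definition ksubmodular_representable (R : realType) (X : finType) (k : nat)
  (g : (X -> option 'I_k) -> R) :=
  exists c : network R X k,
    [/\ nonneg_network c, ksubmodular_network c & represents c g].

Definition f_perm (R : realType) (k : nat) (pi : {perm 'I_k})
  (x y : option 'I_k) : R :=
  match x, y with
  | None, None => 0
  | Some a, Some b => if a == pi b then 0 else 1
  | _, _ => 1 / 2
  end.

Definition f_perm_fun (R : realType) (k : nat) (pi : {perm 'I_k})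
  (phi : 'I_2 -> option 'I_k) : R :=
  f_perm R pi (phi ord0) (phi (lift ord0 ord0)).

From mathcomp Require Import all_boot all_order all_algebra all_fingroup.
From mathcomp Require Import reals.
Set Implicit Arguments. Unset Strict Implicit. Unset Printing Implicit Defensive.
Import Order.TTheory GRing.Theory Num.Theory.
Local Open Scope ring_scope.

(* The network has, for every j, an undirected edge of capacity 1/2 between
   x_(pi j) and y_j.  The capacity of a cut S is therefore half the Hamming
   distance between the layers S ∩ X_x and pi(S ∩ X_y), which on the cuts S_phi
   is exactly f.  The map nu keeps a layer if it is a singleton and empties it
   otherwise.  This never increases the Hamming distance of two sets: if both
   are singletons nothing changes, if neither is the distance drops to 0, and
   if exactly one is, the two sets were distinct and the new distance is 1. *)

Section SetDistance.
Variable T : finType.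
Implicit Types A B : {set T}.

Definition set_dist A B : nat := #|[set x | (x \in A) != (x \in B)]|.

Lemma set_distC A B : set_dist A B = set_dist B A.
Proof. by rewrite /set_dist; apply: eq_card => x; rewrite !inE eq_sym. Qed.

Lemma set_dist0r A : set_dist A set0 = #|A|.
Proof. by rewrite /set_dist; apply: eq_card => x; rewrite !inE; case: (x \in A). Qed.

Lemma set_dist_eq0 A B : (set_dist A B == 0%N) = (A == B).
Proof.
rewrite /set_dist cards_eq0; apply/eqP/eqP => [/setP AB|->].
  by apply/setP => x; move: (AB x); rewrite !inE => /negbFE/eqP.
by apply/setP => x; rewrite !inE eqxx.
Qed.

Lemma set_dist11 a b : set_dist [set a] [set b] = if a == b then 0%N else 2%N.
Proof.
have [<-|ab] := eqVneq a b; first by apply/eqP; rewrite set_dist_eq0.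
rewrite /set_dist (_ : [set x | _] = [set a; b]) ?cards2 ?ab //.
apply/setP => x; rewrite !inE.
by have [->|_] := eqVneq x a; [rewrite (negbTE ab) | case: (x == b)].
Qed.

Definition singleton_part A : {set T} := if #|A| == 1%N then A else set0.

Lemma mem_singleton_part A x :
  (x \in singleton_part A) = (x \in A) && (A \subset [set x]).
Proof.
rewrite /singleton_part; case: cards1P => [[y ->]|not_single].
  by rewrite sub1set !inE eq_sym andbb.
rewrite inE; apply/esym/negbTE; apply/negP => /andP[xA].
rewrite subset1 => /orP[/eqP Ax|/eqP A0]; first by apply: not_single; exists x.
by rewrite A0 inE in xA.
Qed.

Lemma set_dist_singleton_part A B :
  (set_dist (singleton_part A) (singleton_part B) <= set_dist A B)%N.
Proof.
rewrite /singleton_part.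
have [A1|A1] := eqVneq #|A| 1%N; have [B1|B1] := eqVneq #|B| 1%N => //.
- by rewrite set_dist0r A1 lt0n set_dist_eq0; apply: contra_neq B1 => <-.
- by rewrite set_distC set_dist0r B1 lt0n set_dist_eq0; apply: contra_neq A1 => ->.
- by rewrite set_dist0r cards0.
Qed.

Lemma singleton_part_imset (f : T -> T) A :
  injective f -> singleton_part (f @: A) = f @: singleton_part A.
Proof.
by move=> f_inj; rewrite /singleton_part card_imset //; case: ifP; rewrite ?imset0.
Qed.

End SetDistance.

Section Networks.
Variables (R : realType) (X : finType) (k : nat).
Implicit Types (c : network R X k) (S : {set node X k}).

Lemma cut_capD c1 c2 S :
  cut_cap (fun u w => c1 u w + c2 u w) S = cut_cap c1 S + cut_cap c2 S.
Proof. by rewrite /cut_cap -big_split; apply: eq_bigr => u _; rewrite -big_split. Qed.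

Lemma cut_capZ a c S : cut_cap (fun u w => a * c u w) S = a * cut_cap c S.
Proof. by rewrite /cut_cap mulr_sumr; apply: eq_bigr => u _; rewrite mulr_sumr. Qed.

Lemma cut_cap_sum (J : finType) (c : J -> network R X k) S :
  cut_cap (fun u w => \sum_j c j u w) S = \sum_j cut_cap (c j) S.
Proof.
rewrite /cut_cap [RHS]exchange_big; apply: eq_bigr => u _.
by rewrite [RHS]exchange_big.
Qed.

Definition arc (p q : node X k) : network R X k := fun u w => ((u == p) && (w == q))%:R.

Lemma sum_indicator1 (T : finType) (A : {set T}) (p : T) :
  \sum_(u in A) ((u == p)%:R : R) = (p \in A)%:R.
Proof.
rewrite big_mkcond (bigD1 p) //= eqxx big1 ?addr0 => [|u /negbTE->]; last by case: ifP.
by case: (p \in A).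
Qed.

Lemma cut_cap_arc p q S : cut_cap (arc p q) S = ((p \in S) && (q \notin S))%:R.
Proof.
rewrite /cut_cap /arc.
under eq_bigr do under eq_bigr do rewrite -mulnb natrM.
by rewrite -big_distrlr /= !sum_indicator1 -natrM mulnb inE.
Qed.

Definition half_edge_network (J : finType) (p q : J -> node X k) : network R X k :=
  fun u w => 2^-1 * \sum_j (arc (p j) (q j) u w + arc (q j) (p j) u w).

Lemma half_edge_network_ge0 (J : finType) (p q : J -> node X k) :
  nonneg_network (half_edge_network p q).
Proof.
move=> u w; rewrite mulr_ge0 ?invr_ge0 ?ler0n //.
by apply: sumr_ge0 => j _; rewrite addr_ge0 ?ler0n.
Qed.

Lemma cut_cap_half_edge_network (J : finType) (p q : J -> node X k) S :
  cut_cap (half_edge_network p q) S = #|[set j | (p j \in S) != (q j \in S)]|%:R / 2.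
Proof.
rewrite cut_capZ cut_cap_sum mulrC.
under eq_bigr do rewrite cut_capD !cut_cap_arc -natrD.
rewrite -natr_sum -sum1_card; congr (_%:R / 2); rewrite [RHS]big_mkcond.
by apply: eq_bigr => j _; rewrite inE; case: (p j \in S); case: (q j \in S).
Qed.

Definition layer S (v : X) : {set 'I_k} := [set i | vx v i \in S].

Lemma layer_S_of phi v : layer (S_of phi) v = if phi v is Some i then [set i] else set0.
Proof.
apply/setP => i; rewrite !inE /=.
have -> : [exists v', exists i', (vx v i == vx v' i') && (phi v' == Some i')] =
          (phi v == Some i).
  apply/existsP/eqP => [[v' /existsP[i' /andP[/eqP[-> ->] /eqP//]]]|phi_v].
  by exists v; apply/existsP; exists i; rewrite eqxx phi_v eqxx.
by case: (phi v) => [j|]; rewrite !inE // eq_sym.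
Qed.

Lemma layer_nu S v : layer (nu S) v = singleton_part (layer S v).
Proof.
apply/setP => i; rewrite mem_singleton_part !inE /=.
apply/existsP/andP => [[v' /existsP[i' /and3P[/eqP[-> ->] Si /forallP uniq]]]|].
  by split=> //; apply/subsetP => j; rewrite !inE; exact/implyP/uniq.
move=> [Si /subsetP uniq]; exists v; apply/existsP; exists i; rewrite eqxx Si /=.
by apply/forallP => j; apply/implyP => Sj; rewrite -in_set1 uniq ?inE.
Qed.

End Networks.

Section PermutationNetwork.
Variables (R : realType) (X : finType) (k : nat) (pi : {perm 'I_k}) (x y : X).

Definition perm_network : network R X k :=
  half_edge_network R (fun j => vx x (pi j)) (fun j => vx y j).

Lemma cut_cap_perm_network (S : {set node X k}) :
  cut_cap perm_network S = (set_dist (layer S x) (pi @: layer S y))%:R / 2.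
Proof.
rewrite cut_cap_half_edge_network /set_dist.
rewrite -[in RHS](card_preimset _ (@perm_inj _ pi)); congr (_%:R / 2).
by apply: eq_card => j; rewrite !inE mem_imset ?inE //; exact: perm_inj.
Qed.

Lemma perm_network_represents :
  represents perm_network (fun phi => f_perm R pi (phi x) (phi y)).
Proof.
move=> phi; rewrite cut_cap_perm_network !layer_S_of.
case: (phi x) => [a|]; case: (phi y) => [b|] /=; rewrite ?imset_set1 ?imset0.
- by rewrite set_dist11; case: eqP => _; rewrite ?mul0r ?divff ?pnatr_eq0.
- by rewrite set_dist0r cards1.
- by rewrite set_distC set_dist0r cards1.
- by rewrite set_dist0r cards0 mul0r.
Qed.

Lemma perm_network_ksubmodular : ksubmodular_network perm_network.
Proof.
move=> S _; rewrite !cut_cap_perm_network !layer_nu.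
rewrite -singleton_part_imset; last exact: perm_inj.
by rewrite ler_pM2r ?invr_gt0 ?ltr0n // ler_nat set_dist_singleton_part.
Qed.

End PermutationNetwork.

Theorem lemma21 (R : realType) (k : nat) (pi : {perm 'I_k}) :
  ksubmodular_representable (f_perm_fun R pi).
Proof.
exists (perm_network R pi ord0 (lift ord0 ord0)); split.
- exact: half_edge_network_ge0.
- exact: perm_network_ksubmodular.
- exact: perm_network_represents.
Qed.
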